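(* Consider $N$ advertisers with click-through rates $c_i\in(0,1]$, abandonment probabilities $\gamma_i\ge0$, $\mu_i=c_i+\gamma_i\le 1$, and private values per click $v_i\ge0$, indexed so that $\frac{c_1v_1}{\mu_1}\ge\dots\ge\frac{c_Nv_N}{\mu_N}$. Let $b_{N+1}=0$ and $b_i=\frac{\mu_i}{c_i}\big[v_ic_i+(1-\mu_i)\frac{b_{i+1}c_{i+1}}{\mu_{i+1}}\big]$ for $i=N,\dots,1$. Then the search engine's expected revenue under the CE mechanism with bids $(b_1,\dots,b_N)$ equals its expected revenue under the VCG mechanism with truthful bids $b_i=v_i$ for all $i$.
   Context: Click model: users view ads top to bottom; having viewed the ad at position $k$ the user clicks it with probability $c$ of that ad, abandons with probability $\gamma$ of that ad, and otherwise moves on; so the ad at position $k$ in order $(1),\dots,(N)$ is clicked with probability $c_{(k)}\prod_{l<k}(1-\mu_{(l)})$. Search engine expected revenue is $\sum_k p_{(k)}c_{(k)}\prod_{l<k}(1-\mu_{(l)})$. CE mechanism: with $w=c/\mu$, ads are ranked in descending order of $wb$ and the ad at position $i$ pays per click $\frac{b_{i+1}c_{i+1}\mu_i}{\mu_{i+1}c_i}$, where $i+1$ is the ad immediately below (bottom ad pays $0$). VCG mechanism: ads are ranked in descending order of $\frac{b c}{\mu}$ and the ad at position $i$ pays per click $\frac{\mu_i}{c_i}\sum_{j=i+1}^{N}b_jc_j\prod_{k=i+1}^{j-1}(1-\mu_k)$ (indices referring to positions). *)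

(* positions/advertisers indexed 0..N-1 (paper's 1..N). *)
From mathcomp Require Import all_boot all_order all_algebra.
Set Implicit Arguments. Unset Strict Implicit. Unset Printing Implicit Defensive.
Import Order.TTheory GRing.Theory Num.Theory.
Local Open Scope ring_scope.

Section Ads.
Variable R : realFieldType.
Variable N : nat.
Variables (c g : nat -> R).

Definition mu (i : nat) : R := c i + g i.
Definition w (i : nat) : R := c i / mu i.

Definition click_prob (k : nat) : R := c k * \prod_(l < k) (1 - mu l).

(* Search engine expected revenue, given per-click prices p (ads in index order). *)
Definition revenue (p : nat -> R) : R := \sum_(k < N) p k * click_prob k.

Definition ce_price (b : nat -> R) (i : nat) : R :=
  if (i.+1 < N)%N then b i.+1 * c i.+1 * mu i / (mu i.+1 * c i) else 0.

Definition vcg_price (b : nat -> R) (i : nat) : R :=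
  mu i / c i * \sum_(i.+1 <= j < N)
      b j * c j * \prod_(i.+1 <= k < j) (1 - mu k).

(* The bids b_i of the theorem: b_N = 0 (paper's b_{N+1}) and
   b_i = mu_i/c_i * (v_i c_i + (1-mu_i) b_{i+1} c_{i+1}/mu_{i+1}). *)
Fixpoint ce_bid_aux (v : nat -> R) (n i : nat) : R :=
  match n with
  | 0 => 0
  | n'.+1 => mu i / c i *
      (v i * c i + (1 - mu i) * (ce_bid_aux v n' i.+1 * c i.+1 / mu i.+1))
  end.

Definition ce_bid (v : nat -> R) (i : nat) : R := ce_bid_aux v (N - i) i.

End Ads.

From mathcomp Require Import all_boot all_order all_algebra.
From mathcomp Require Import zify ring lra.
Set Implicit Arguments. Unset Strict Implicit. Unset Printing Implicit Defensive.
Import Order.TTheory GRing.Theory Num.Theory.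
Local Open Scope ring_scope.

(* Write B_i = b_i c_i / mu_i for the normalized bid. The defining recursion of
   the bids reads B_i = v_i c_i + (1 - mu_i) B_{i+1}, so B_i unrolls to the
   expected value per impression of the ads from position i on, which is what
   VCG charges (scaled by mu_i / c_i); the CE price is the same scaling of
   B_{i+1}.  Moreover B_i is a convex combination of c_i v_i / mu_i and
   B_{i+1}; by the ordering of the ratios c_i v_i / mu_i this gives
   B_{i+1} <= c_i v_i / mu_i, hence B_{i+1} <= B_i: the CE ranking is the
   index order. *)

Section NormalizedBids.
Variable R : realFieldType.
Variable N : nat.
Variables (c g v : nat -> R).
Hypothesis c_gt0 : forall i, (i < N)%N -> 0 < c i.
Hypothesis g_ge0 : forall i, (i < N)%N -> 0 <= g i.

Definition normalized_bid (i : nat) : R := ce_bid N c g v i * c i / mu c g i.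

Definition tail_value (i : nat) : R :=
  \sum_(i <= j < N) v j * c j * \prod_(i <= k < j) (1 - mu c g k).

Definition value_ratio (i : nat) : R := c i * v i / mu c g i.

Lemma mu_gt0 i : (i < N)%N -> 0 < mu c g i.
Proof. by move=> iN; rewrite /mu; have := c_gt0 iN; have := g_ge0 iN; lra. Qed.

Lemma ce_bid_eq0 i : (N <= i)%N -> ce_bid N c g v i = 0.
Proof. by move=> Ni; rewrite /ce_bid (eqP Ni). Qed.

Lemma ce_bidS i : (i < N)%N -> ce_bid N c g v i = mu c g i / c i *
  (v i * c i + (1 - mu c g i) * (ce_bid N c g v i.+1 * c i.+1 / mu c g i.+1)).
Proof. by move=> iN; rewrite /ce_bid -subnSK. Qed.

Lemma normalized_bid_eq0 i : (N <= i)%N -> normalized_bid i = 0.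
Proof. by move=> Ni; rewrite /normalized_bid ce_bid_eq0 // !mul0r. Qed.

Lemma normalized_bidS i : (i < N)%N ->
  normalized_bid i = v i * c i + (1 - mu c g i) * normalized_bid i.+1.
Proof.
move=> iN; rewrite /normalized_bid ce_bidS //.
have c0 := c_gt0 iN; have m0 := mu_gt0 iN.
set next := _ * c i.+1 / _.
by field; rewrite !gt_eqF.
Qed.

Lemma normalized_bid_tail i : normalized_bid i = tail_value i.
Proof.
have [n] := ubnP (N - i)%N; elim: n i => // n IH i iNn.
have [Ni | iN] := leqP N i.
  by rewrite normalized_bid_eq0 // /tail_value big_geq.
rewrite normalized_bidS // IH; last by lia.
rewrite /tail_value (big_ltn iN) big_geq // mulr1; congr (_ + _).
rewrite big_distrr /=; apply: eq_big_nat => j /andP[ij _].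
by rewrite (big_ltn ij); ring.
Qed.

Hypothesis mu_le1 : forall i, (i < N)%N -> mu c g i <= 1.
Hypothesis v_ge0 : forall i, (i < N)%N -> 0 <= v i.
Hypothesis value_ratio_nonincr : forall i, (i.+1 < N)%N ->
  value_ratio i.+1 <= value_ratio i.

Lemma normalized_bid_convex i : (i < N)%N ->
  normalized_bid i = mu c g i * value_ratio i +
                     (1 - mu c g i) * normalized_bid i.+1.
Proof.
move=> iN; rewrite normalized_bidS // /value_ratio.
by congr (_ + _); field; rewrite gt_eqF ?mu_gt0.
Qed.

Lemma normalized_bidS_le_value_ratio i : (i < N)%N ->
  normalized_bid i.+1 <= value_ratio i.
Proof.
have [n] := ubnP (N - i)%N; elim: n i => // n IH i iNn iN.
have [Ni1 | i1N] := leqP N i.+1.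
  rewrite normalized_bid_eq0 // /value_ratio divr_ge0 ?(ltW (mu_gt0 iN)) //.
  by rewrite mulr_ge0 ?v_ge0 ?(ltW (c_gt0 iN)).
apply: le_trans (value_ratio_nonincr i1N).
have IHi1 := IH i.+1 ltac:(lia) i1N.
rewrite normalized_bid_convex //.
have m0 := mu_gt0 i1N; have m1 := mu_le1 i1N; nra.
Qed.

Lemma normalized_bid_nonincr i : (i < N)%N ->
  normalized_bid i.+1 <= normalized_bid i.
Proof.
move=> iN; have le_ratio := normalized_bidS_le_value_ratio iN.
rewrite [X in _ <= X]normalized_bid_convex //.
have m0 := mu_gt0 iN; have m1 := mu_le1 iN; nra.
Qed.

Lemma ce_price_normalized_bid i : (i < N)%N ->
  ce_price N c g (ce_bid N c g v) i = vcg_price N c g v i.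
Proof.
move=> iN.
have -> : vcg_price N c g v i = mu c g i / c i * normalized_bid i.+1.
  by rewrite normalized_bid_tail.
rewrite /ce_price.
have c0 := c_gt0 iN; have m0 := mu_gt0 iN.
case: ifP => [i1N | /negbT]; last first.
  by rewrite -leqNgt => Ni1; rewrite normalized_bid_eq0 ?mulr0.
have m1 := mu_gt0 i1N.
by rewrite /normalized_bid; field; rewrite !gt_eqF.
Qed.

End NormalizedBids.

Lemma w_mul_bid (R : realFieldType) (c g : nat -> R) (b : R) (i : nat) :
  w c g i * b = b * c i / mu c g i.
Proof. by rewrite /w; ring. Qed.

Theorem theorem5 (R : realFieldType) (N : nat) (c g v : nat -> R)
  (hc : forall i, (i < N)%N -> 0 < c i /\ c i <= 1)
  (hg : forall i, (i < N)%N -> 0 <= g i)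
  (hmu : forall i, (i < N)%N -> mu c g i <= 1)
  (hv : forall i, (i < N)%N -> 0 <= v i)
  (hord : forall i, (i.+1 < N)%N ->
     c i.+1 * v i.+1 / mu c g i.+1 <= c i * v i / mu c g i) :
  let b := ce_bid N c g v in
  (* the index order is a CE ranking: descending in w * b *)
  (forall i, (i.+1 < N)%N -> w c g i.+1 * b i.+1 <= w c g i * b i) /\
  revenue N c g (ce_price N c g b) = revenue N c g (vcg_price N c g v).
Proof.
have c_gt0 i (iN : (i < N)%N) : 0 < c i by case: (hc i iN).
move=> b; split.
  move=> i i1N; rewrite !w_mul_bid.
  exact: (normalized_bid_nonincr c_gt0 hg hmu hv hord (ltnW i1N)).
apply: eq_bigr => k _; congr (_ * _).
exact: (ce_price_normalized_bid v c_gt0 hg (ltn_ord k)).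
Qed.
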